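(* Let $\mathcal{D}(n,k,d)$ be a distributed storage system with node storage capacity $\alpha$ and repair bandwidth $\gamma=d\beta$, in the presence of a passive eavesdropper who can observe any $\ell<k$ storage nodes. Then its secrecy capacity satisfies \[ C_s(\alpha,\gamma)\le \sum_{i=\ell+1}^{k}\min\{(d-i+1)\beta,\ \alpha\}. \]
   Context: A distributed storage system (DSS) $\mathcal{D}(n,k,d)$, $k\le d\le n-1$: a source holds a file, modeled as a random variable $S$ uniform over $\mathbb{F}_q^R$ (so $H(S)=R$, entropy in base $q$), which is encoded and stored on $n$ storage nodes $v_1,\dots,v_n$, each storing at most $\alpha$ symbols of $\mathbb{F}_q$. Nodes fail one at a time; the $i$-th failed node is replaced by a new node $v_{n+i}$ that connects to some $d$ of the remaining $n-1$ active nodes and downloads $\beta=\gamma/d$ symbols from each (symmetric repair; $\gamma$ is the repair bandwidth), then stores at most $\alpha$ symbols computed from the downloaded data. The system must always have $n$ active nodes. For a node $v_i$, $D_i$ denotes all the data it downloads when joining (for the initial nodes, the data it receives from the source) and $C_i$ the data it stores. Reconstruction property: for every failure/repair sequence and every set $B$ of $k$ simultaneously active nodes, $H(S\mid C_B)=0$ where $C_B=\{C_i: v_i\in B\}$. A passive eavesdropper may choose any set $E$ of at most $\ell$ nodes among all nodes ever in the system $v_1,v_2,\dots$ (possibly at different times) and observes $D_E=\{D_i:v_i\in E\}$ (i.e., all data downloaded by those nodes, in addition to what they store); she cannot modify data. Perfect secrecy: $H(S\mid D_E)=H(S)$ for all such $E$ with $|E|\le \ell$. The storage and repair schemes are known to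 everyone. The secrecy capacity $C_s(\alpha,\gamma)$ is the supremum of $H(S)$ over all storage and repair schemes satisfying both the reconstruction property and perfect secrecy for all data collectors and all eavesdropping sets. *)

From HB Require Import structures.
From mathcomp Require Import all_boot all_order all_algebra all_field.
From Stdlib Require Import Reals.

Set Implicit Arguments.
Unset Strict Implicit.
Unset Printing Implicit Defensive.

Local Open Scope R_scope.

Definition prob (Om : finType) (P : Om -> R) (U : eqType) (X : Om -> U) (x : U) : R :=
  \big[Rplus/0]_(w : Om | X w == x) P w.

(* Entropy in base q:  H(X) = - sum_w P(w) log_q Pr[X = X(w)]
   (= - sum_x Pr[X=x] log_q Pr[X=x], summing over the support). *)
Definition entropy (q : R) (Om : finType) (P : Om -> R) (U : eqType) (X : Om -> U) : R :=
  - \big[Rplus/0]_(w : Om) (P w * (ln (prob P X (X w)) / ln q)).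

Definition pairRV (Om : Type) (U V : Type) (X : Om -> U) (Y : Om -> V) : Om -> U * V :=
  fun w => (X w, Y w).

Definition cond_entropy (q : R) (Om : finType) (P : Om -> R) (U V : eqType)
    (X : Om -> U) (Y : Om -> V) : R :=
  entropy q P (pairRV X Y) - entropy q P Y.

(* A repair event: (index of the failed node, list of the d helper nodes).
   Nodes are numbered 0,1,2,...: nodes 0..n-1 are the initial nodes and the
   newcomer created by the t-th repair (t = 0,1,...) is node n + t. *)
Definition event := (nat * seq nat)%type.

Definition dflt_event : event := (0%nat, [::]).

Fixpoint active_from (n : nat) (A : seq nat) (t : nat) (h : seq event) : seq nat :=
  match h with
  | [::] => A
  | e :: h' => active_from n (rcons (filter (fun j => j != e.1) A) (n + t)%nat) t.+1 h'
  end.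

Definition active (n : nat) (h : seq event) : seq nat := active_from n (iota 0 n) 0 h.

Definition valid_event (d : nat) (A : seq nat) (e : event) : bool :=
  [&& e.1 \in A, uniq e.2, size e.2 == d, all (fun j => j \in A) e.2 & e.1 \notin e.2].

Fixpoint valid_from (n d : nat) (A : seq nat) (t : nat) (h : seq event) : bool :=
  match h with
  | [::] => true
  | e :: h' => valid_event d A e &&
               valid_from n d (rcons (filter (fun j => j != e.1) A) (n + t)%nat) t.+1 h'
  end.

Definition valid_history (n d : nat) (h : seq event) : bool :=
  valid_from n d (iota 0 n) 0 h.

(* All data are random variables on a common finite probability space.
   - S : the file, a vector in F^Rf;
   - Dinit i / Cinit i : data sent by the source to / stored by initial node i;
   - msg h e j : data sent by helper j to the newcomer created by event e,
     after the history h of previous repairs;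
   - Cnew h e : data stored by that newcomer. *)
Record scheme (F : finFieldType) := Scheme {
  Om : finType;
  P : Om -> R;
  Rf : nat;
  S : Om -> 'rV[F]_Rf;
  Dinit : nat -> Om -> seq F;
  Cinit : nat -> Om -> seq F;
  msg : seq event -> event -> nat -> Om -> seq F;
  Cnew : seq event -> event -> Om -> seq F
}.

Arguments Om {F} s.
Arguments P {F} s _.
Arguments Rf {F} s.
Arguments S {F} s _.
Arguments Dinit {F} s _ _.
Arguments Cinit {F} s _ _.
Arguments msg {F} s _ _ _ _.
Arguments Cnew {F} s _ _ _.

Section Nodes.
Variables (F : finFieldType) (n : nat) (sc : scheme F).

(* Stored data C_i of node i in the system evolved along history h
   (meaningful for i < n + size h). *)
Definition Cnode (h : seq event) (i : nat) : Om sc -> seq F :=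
  if ltn i n then Cinit sc i
  else Cnew sc (take (i - n) h) (nth dflt_event h (i - n)).

Definition Dnode (h : seq event) (i : nat) : Om sc -> seq (seq F) :=
  if ltn i n then (fun w => [:: Dinit sc i w])
  else let p := take (i - n) h in
       let e := nth dflt_event h (i - n) in
       (fun w => [seq msg sc p e j w | j <- e.2]).

Definition Cset (h : seq event) (B : seq nat) : Om sc -> seq (seq F) :=
  fun w => [seq Cnode h i w | i <- B].

Definition Dset (h : seq event) (E : seq nat) : Om sc -> seq (seq (seq F)) :=
  fun w => [seq Dnode h i w | i <- E].

End Nodes.

Arguments Cnode {F} n sc h i _.
Arguments Dnode {F} n sc h i _.
Arguments Cset {F} n sc h B _.
Arguments Dset {F} n sc h E _.

Definition secure_dss (F : finFieldType) (n k d l : nat) (alpha beta : R)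
    (sc : scheme F) : Prop :=
  let q := INR #|F| in
  let Pr := P sc in
  (forall w, 0 <= Pr w) /\ \big[Rplus/0]_(w : Om sc) Pr w = 1 /\
  (forall s : 'rV[F]_(Rf sc), prob Pr (S sc) s = / (q ^ Rf sc)) /\
  (forall i, ltn i n ->
     entropy q Pr (Cinit sc i) <= alpha /\
     cond_entropy q Pr (Cinit sc i) (Dinit sc i) = 0) /\
  (forall h e, valid_history n d (rcons h e) ->
     (forall j, j \in e.2 ->
        entropy q Pr (msg sc h e j) <= beta /\
        cond_entropy q Pr (msg sc h e j) (Cnode n sc h j) = 0) /\
     entropy q Pr (Cnew sc h e) <= alpha /\
     cond_entropy q Pr (Cnew sc h e) (Dnode n sc (rcons h e) (n + size h)) = 0) /\
  (forall h B, valid_history n d h -> uniq B -> size B = k ->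
     all (fun i => i \in active n h) B ->
     cond_entropy q Pr (S sc) (Cset n sc h B) = 0) /\
  (forall h E, valid_history n d h -> leq (size E) l ->
     all (fun i => ltn i (n + size h)%nat) E ->
     cond_entropy q Pr (S sc) (Dset n sc h E) = entropy q Pr (S sc)).

Definition secrecy_bound (k d l : nat) (alpha beta : R) : R :=
  \big[Rplus/0]_(l.+1 <= i < k.+1) Rmin (INR (d - i + 1) * beta) alpha.

From HB Require Import structures.
From mathcomp Require Import all_boot all_order all_algebra all_field zify.
From Stdlib Require Import Reals Lra.

(* Consider the repair sequence in which, for i < k, initial node i fails and
   its newcomer downloads from all earlier newcomers and from the initial nodes
   i + 1, ..., d, and let the eavesdropper observe what the first l newcomers
   download.  Secrecy and reconstruction from the k newcomers give
   H(S) = H(S | eve) <= H(C_0, ..., C_{k-1} | eve).  Expanding by the chain rule,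
   the first l stored contents are functions of eve, and each later C_i adds at
   most alpha (its size) and at most (d - i) beta, since given C_0, ..., C_{i-1}
   only the messages of the d - i initial helpers are new.  All entropy
   inequalities used reduce to submodularity of entropy, which follows from
   ln x <= x - 1. *)

Set Implicit Arguments.
Unset Strict Implicit.
Unset Printing Implicit Defensive.

Section RepairHistory.
Variables (n d k : nat).
Hypotheses (k_le_d : (k <= d)%nat) (d_le_n1 : (d <= n - 1)%nat).

Definition repair_event (i : nat) : event := (i, iota n i ++ iota i.+1 (d - i)).

Definition repair_history (m : nat) : seq event := map repair_event (iota 0 m).

Definition active_after (t : nat) : seq nat := iota t (n - t) ++ iota n t.

Lemma size_repair_history m : size (repair_history m) = m.
Proof. by rewrite size_map size_iota. Qed.

Lemma take_repair_history j m :
  (j <= m)%nat -> take j (repair_history m) = repair_history j.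
Proof. by move=> j_le_m; rewrite -map_take take_iota (minn_idPl j_le_m). Qed.

Lemma nth_repair_history j m :
  (j < m)%nat -> nth dflt_event (repair_history m) j = repair_event j.
Proof. by move=> j_lt_m; rewrite (nth_map 0%nat) ?size_iota // nth_iota. Qed.

Lemma repair_history_rcons m :
  rcons (repair_history m) (repair_event m) = repair_history m.+1.
Proof. by rewrite /repair_history -addn1 iotaD map_cat cats1. Qed.

Lemma valid_repair_event t :
  (t < k)%nat -> valid_event d (active_after t) (repair_event t).
Proof.
move=> t_lt_k; apply/and5P; split => /=.
- by rewrite mem_cat mem_iota; apply/orP; left; lia.
- rewrite cat_uniq !iota_uniq andbT /=; apply/hasPn => x; rewrite !mem_iota.
  by move=> ?; apply/negP; lia.
- by rewrite size_cat !size_iota; apply/eqP; lia.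
- apply/allP => x; rewrite !mem_cat !mem_iota.
  by case/orP => ?; apply/orP; [right | left]; lia.
- by rewrite mem_cat !mem_iota; apply/negP; case/orP; lia.
Qed.

Lemma active_after_step t : (t < n)%nat ->
  rcons (filter (fun j => j != t) (active_after t)) (n + t) = active_after t.+1.
Proof.
move=> t_lt_n; rewrite /active_after (_ : n - t = (n - t.+1).+1); last lia.
rewrite /= eqxx /= (all_filterP _); last first.
  by apply/allP => x; rewrite mem_cat !mem_iota; case/orP => ?; apply/eqP; lia.
by rewrite rcons_cat -cats1 -[[:: n + t]]/(iota (n + t) 1) -iotaD addn1.
Qed.

Lemma valid_repairs_from r t : (t + r <= k)%nat ->
  valid_from n d (active_after t) t (map repair_event (iota t r)) &&
  (active_from n (active_after t) t (map repair_event (iota t r))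
     == active_after (t + r)).
Proof.
elim: r t => [|r IHr] t tr_le_k; first by rewrite /= addn0 eqxx.
rewrite /= valid_repair_event; last lia.
by rewrite active_after_step; [rewrite -addSnnS; apply: IHr; lia | lia].
Qed.

Lemma active_after0 : active_after 0 = iota 0 n.
Proof. by rewrite /active_after subn0 cats0. Qed.

Lemma valid_repair_history m :
  (m <= k)%nat -> valid_history n d (repair_history m).
Proof.
by move=> m_le_k; case/andP: (@valid_repairs_from m 0 m_le_k); rewrite active_after0.
Qed.

Lemma active_repair_history : active n (repair_history k) = active_after k.
Proof.
by case/andP: (@valid_repairs_from k 0 (leqnn k)); rewrite active_after0 => _ /eqP.
Qed.

End RepairHistory.

Local Open Scope R_scope.

Lemma RplusA : associative Rplus. Proof. by move=> x y z; rewrite Rplus_assoc. Qed.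
Lemma RmultA : associative Rmult. Proof. by move=> x y z; rewrite Rmult_assoc. Qed.

HB.instance Definition _ :=
  Monoid.isComLaw.Build R 0 Rplus RplusA Rplus_comm Rplus_0_l.
HB.instance Definition _ :=
  Monoid.isComLaw.Build R 1 Rmult RmultA Rmult_comm Rmult_1_l.
HB.instance Definition _ := Monoid.isMulLaw.Build R 0 Rmult Rmult_0_l Rmult_0_r.
HB.instance Definition _ :=
  Monoid.isAddLaw.Build R Rmult Rplus Rmult_plus_distr_r Rmult_plus_distr_l.

Lemma sumR_ge0 (I : Type) (r : seq I) (Q : pred I) (F : I -> R) :
  (forall i, Q i -> 0 <= F i) -> 0 <= \big[Rplus/0]_(i <- r | Q i) F i.
Proof. by move=> F_ge0; elim/big_ind: _ => // [|x y]; lra. Qed.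

Lemma sumR_le (I : Type) (r : seq I) (Q : pred I) (F G : I -> R) :
  (forall i, Q i -> F i <= G i) ->
  \big[Rplus/0]_(i <- r | Q i) F i <= \big[Rplus/0]_(i <- r | Q i) G i.
Proof. by move=> FG; elim/big_ind2: _ => // [|x1 x2 y1 y2]; lra. Qed.

Lemma sumR_opp (I : Type) (r : seq I) (Q : pred I) (F : I -> R) :
  \big[Rplus/0]_(i <- r | Q i) - F i = - \big[Rplus/0]_(i <- r | Q i) F i.
Proof. by symmetry; apply: (big_morph Ropp) => [x y|]; lra. Qed.

Lemma Rinv_ge0 x : 0 <= x -> 0 <= / x.
Proof. by case=> [x_gt0 | <-]; [left; exact: Rinv_0_lt_compat | rewrite Rinv_0; lra]. Qed.

Lemma ln_le_subr1 x : 0 < x -> ln x <= x - 1.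
Proof. by move=> x_gt0; have := exp_ineq1_le (ln x); rewrite exp_ln //; lra. Qed.

Lemma ln_le x y : 0 < x -> x <= y -> ln x <= ln y.
Proof. by move=> x_gt0 [xy | <-]; [left; exact: ln_increasing | lra]. Qed.

Definition jointRV (Om I U : Type) (f : I -> Om -> U) (s : seq I) : Om -> seq U :=
  fun w => [seq f i w | i <- s].

Lemma jointRV_eq (Om I : Type) (U : eqType) (f : I -> Om -> U) s w v :
  (jointRV f s w == jointRV f s v) = all (fun i => f i w == f i v) s.
Proof. by elim: s => //= i s IHs; rewrite eqseq_cons IHs. Qed.

Definition determines (Om : Type) (U V : eqType) (X : Om -> U) (Y : Om -> V) :=
  forall w v, X w == X v -> Y w == Y v.

Lemma determines_fst (Om : Type) (U V : eqType) (X : Om -> U) (Y : Om -> V) :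
  determines (pairRV X Y) X.
Proof. by move=> w v; rewrite xpair_eqE => /andP[]. Qed.

Lemma determines_snd (Om : Type) (U V : eqType) (X : Om -> U) (Y : Om -> V) :
  determines (pairRV X Y) Y.
Proof. by move=> w v; rewrite xpair_eqE => /andP[]. Qed.

Lemma determines_jointRV (Om : Type) (I U : eqType) (f : I -> Om -> U) s i :
  i \in s -> determines (jointRV f s) (f i).
Proof. by move=> i_s w v; rewrite jointRV_eq => /allP; apply. Qed.

Section Entropy.
Variables (q : R) (Om : finType) (P : Om -> R).
Hypotheses (q_gt1 : 1 < q) (P_ge0 : forall w, 0 <= P w)
  (P_sum1 : \big[Rplus/0]_(w : Om) P w = 1).

Local Notation ent := (entropy q P).
Local Notation cent := (cond_entropy q P).
Local Notation pr X w := (prob P X (X w)).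

Lemma ln_q_gt0 : 0 < ln q.
Proof. by rewrite -ln_1; apply: ln_increasing; lra. Qed.

Lemma Rdiv_ln_q_le x y : x <= y -> x / ln q <= y / ln q.
Proof. by move=> xy; apply: Rmult_le_compat_r; [left; apply/Rinv_0_lt_compat/ln_q_gt0|]. Qed.

Lemma entropyE (U : eqType) (X : Om -> U) :
  ent X = - \big[Rplus/0]_(w : Om) (P w * ln (pr X w)) / ln q.
Proof.
rewrite /entropy /Rdiv big_distrl /=; congr (- _).
by apply: eq_bigr => w _; rewrite Rmult_assoc.
Qed.

Lemma P_le_prob (U : eqType) (X : Om -> U) w : P w <= pr X w.
Proof.
rewrite /prob (bigD1 w) //=.
have : 0 <= \big[Rplus/0]_(v | (X v == X w) && (v != w)) P v by apply: sumR_ge0.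
lra.
Qed.

Lemma prob_ge0 (U : eqType) (X : Om -> U) w : 0 <= pr X w.
Proof. by have := P_le_prob X w; have := P_ge0 w; lra. Qed.

Lemma prob_le_determines (U V : eqType) (X : Om -> U) (Y : Om -> V) w :
  determines X Y -> pr X w <= pr Y w.
Proof.
move=> XY; rewrite /prob big_mkcond [X in _ <= X]big_mkcond /=.
apply: sumR_le => v _.
case: ifP => [/XY -> | _]; first lra.
by case: ifP => _; [exact: P_ge0 | lra].
Qed.

Lemma entropy_le_determines (U V : eqType) (X : Om -> U) (Y : Om -> V) :
  determines X Y -> ent Y <= ent X.
Proof.
move=> XY; rewrite !entropyE; apply: Ropp_le_contravar; apply: Rdiv_ln_q_le.
apply: sumR_le => w _; case: (P_ge0 w) => [Pw_gt0 | <-]; last lra.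
apply: Rmult_le_compat_l; first lra.
by apply: ln_le; [have := P_le_prob X w; lra | exact: prob_le_determines].
Qed.

Lemma entropy_partition (U V : eqType) (X : Om -> U) (Y : Om -> V) :
  (forall w v, (X w == X v) = (Y w == Y v)) -> ent X = ent Y.
Proof.
by move=> XY; apply: Rle_antisym; apply: entropy_le_determines => w v; rewrite XY.
Qed.

Lemma eq_entropy (U : eqType) (X Y : Om -> U) : X =1 Y -> ent X = ent Y.
Proof.
move=> XY; rewrite /entropy; congr (- _); apply: eq_bigr => w _.
by rewrite /prob XY; congr (_ * (ln _ / _)); apply: eq_bigl => v; rewrite XY.
Qed.

Lemma eq_cond_entropy (U V : eqType) (X : Om -> U) (Z Z' : Om -> V) :
  Z =1 Z' -> cent X Z = cent X Z'.
Proof.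
move=> ZZ'; rewrite /cond_entropy (eq_entropy ZZ').
by rewrite (@eq_entropy _ _ (pairRV X Z')) // => w; rewrite /pairRV ZZ'.
Qed.

Lemma entropy_pairC (U V : eqType) (X : Om -> U) (Y : Om -> V) :
  ent (pairRV X Y) = ent (pairRV Y X).
Proof. by apply: entropy_partition => w v; rewrite !xpair_eqE andbC. Qed.

Lemma entropy_const (U : eqType) (c : U) : ent (fun _ => c) = 0.
Proof.
rewrite entropyE big1 /Rdiv ?Rmult_0_l ?Ropp_0 // => w _.
by rewrite /prob (eq_bigl xpredT) ?P_sum1 ?ln_1 ?Rmult_0_r // => v; rewrite eqxx.
Qed.

Lemma sum_fiber_le1 (U : eqType) (X : Om -> U) (Q : pred Om) :
  (forall w w', Q w -> Q w' -> X w = X w') ->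
  \big[Rplus/0]_(w | Q w) (P w / pr X w) <= 1.
Proof.
move=> QX; case: (pickP Q) => [w0 Qw0 | Q0]; last by rewrite big_pred0 //; lra.
apply: (@Rle_trans _ (\big[Rplus/0]_(w | X w == X w0) (P w / pr X w0))).
  rewrite big_mkcond [X in _ <= X]big_mkcond /=.
  apply: sumR_le => w _; case: ifP => Qw.
    by rewrite (QX w w0 Qw Qw0) eqxx; lra.
  by case: ifP => _; [exact: Rmult_le_pos (P_ge0 w) (Rinv_ge0 (prob_ge0 X w0)) | lra].
rewrite -big_distrl /= -/(prob P X (X w0)).
have [-> | pX_neq0] := Req_dec (pr X w0) 0; first by rewrite Rmult_0_l; lra.
by rewrite Rinv_r //; lra.
Qed.

Section Submodularity.
Variables (UA UB UC : eqType) (A : Om -> UA) (B : Om -> UB) (C : Om -> UC).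

Let ABC := pairRV (pairRV A B) C.
Let AC := pairRV A C.
Let BC := pairRV B C.
Let ratio w := pr AC w * pr BC w / (pr ABC w * pr C w).

Lemma sum_fiber_ratio_le u v :
  \big[Rplus/0]_(w | (AC u == AC w) && (BC v == BC w))
     (P w / (pr ABC w * pr C w))
  <= if C v == C u then / pr C v else 0.
Proof.
have invC_ge0 := Rinv_ge0 (prob_ge0 C v).
case: (pickP (fun w => (AC u == AC w) && (BC v == BC w))) => [w0 | none]; last first.
  by rewrite big_pred0 //; case: ifP => _; lra.
rewrite !xpair_eqE => /andP[/andP[/eqP Auw0 /eqP Cuw0] /andP[/eqP Bvw0 /eqP Cvw0]].
rewrite Cuw0 -Cvw0 eqxx.
apply: (@Rle_trans _ (/ pr C v * \big[Rplus/0]_(w | (AC u == AC w) && (BC v == BC w))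
                                    (P w / pr ABC w))).
  rewrite big_distrr /=; apply: Req_le; apply: eq_bigr => w.
  rewrite !xpair_eqE => /andP[/andP[_ /eqP Cuw] _].
  by rewrite /prob -Cuw Cuw0 -Cvw0 /Rdiv Rinv_mult; ring.
rewrite -[X in _ <= X]Rmult_1_r; apply: Rmult_le_compat_l => //.
apply: sum_fiber_le1 => w w'; rewrite /ABC /pairRV !xpair_eqE.
move=> /andP[/andP[/eqP<- /eqP<-] /andP[/eqP<- _]].
by move=> /andP[/andP[/eqP<- /eqP<-] /andP[/eqP<- _]].
Qed.

(* Expanding the numerator of [ratio] gives a sum over triples (u, v, w); for
   fixed u and v the admissible w form a single ABC-fiber. *)
Lemma sum_ratio_le1 : \big[Rplus/0]_(w : Om) (P w * ratio w) <= 1.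
Proof.
have expand w : P w * ratio w = \big[Rplus/0]_(u : Om) \big[Rplus/0]_(v : Om)
    (if (AC u == AC w) && (BC v == BC w)
     then P u * P v * (P w / (pr ABC w * pr C w)) else 0).
  transitivity (pr AC w * pr BC w * (P w / (pr ABC w * pr C w))).
    by rewrite /ratio /Rdiv; ring.
  rewrite [pr AC w]/prob [pr BC w]/prob !(big_mkcond (fun _ => _ == _)) /=.
  rewrite big_distrlr /= big_distrl /=.
  apply: eq_bigr => u _; rewrite big_distrl /=; apply: eq_bigr => v _.
  by case: (AC u == AC w); case: (BC v == BC w); rewrite /=; ring.
rewrite (eq_bigr _ (fun w _ => expand w)) exchange_big /=.
rewrite -P_sum1; apply: sumR_le => u _; rewrite exchange_big /=.
apply: (@Rle_trans _ (\big[Rplus/0]_(v | C v == C u) (P u * (P v / pr C v)))).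
  rewrite [X in _ <= X]big_mkcond /=; apply: sumR_le => v _.
  rewrite -big_mkcond /= -big_distrr /=.
  have := sum_fiber_ratio_le u v; have Puv := Rmult_le_pos _ _ (P_ge0 u) (P_ge0 v).
  case: ifP => _ fiber_le; last by have := Rmult_le_compat_l _ _ _ Puv fiber_le; rewrite Rmult_0_r.
  by rewrite /Rdiv -Rmult_assoc; exact: Rmult_le_compat_l Puv fiber_le.
rewrite -big_distrr /= -[X in _ <= X]Rmult_1_r; apply: Rmult_le_compat_l => //.
by apply: sum_fiber_le1 => v v' /eqP-> /eqP->.
Qed.

Lemma submod_pointwise w :
  P w * ln (pr AC w) + P w * ln (pr BC w)
  <= P w * ln (pr ABC w) + P w * ln (pr C w) + (P w * ratio w - P w).
Proof.
case: (P_ge0 w) => [Pw_gt0 | <-]; last by rewrite !Rmult_0_l; lra.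
have pr_gt0 (U : eqType) (X : Om -> U) : 0 < pr X w by have := P_le_prob X w; lra.
have num_gt0 := Rmult_lt_0_compat _ _ (pr_gt0 _ AC) (pr_gt0 _ BC).
have den_gt0 := Rmult_lt_0_compat _ _ (pr_gt0 _ ABC) (pr_gt0 _ C).
have ratio_gt0 : 0 < ratio w := Rmult_lt_0_compat _ _ num_gt0 (Rinv_0_lt_compat _ den_gt0).
have ln_ratio : ln (ratio w) = ln (pr AC w) + ln (pr BC w) - ln (pr ABC w) - ln (pr C w).
  rewrite /ratio /Rdiv ln_mult ?ln_Rinv ?ln_mult //; first lra.
  exact: Rinv_0_lt_compat.
have := Rmult_le_compat_l _ _ _ (Rlt_le _ _ Pw_gt0) (ln_le_subr1 ratio_gt0).
by rewrite ln_ratio; lra.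
Qed.

Lemma entropy_submod : ent ABC + ent C <= ent AC + ent BC.
Proof.
have := @sumR_le _ (index_enum Om) xpredT _ _ (fun w _ => submod_pointwise w).
rewrite /Rminus !big_split /= sumR_opp P_sum1 => pointwise.
have := sum_ratio_le1; have := Rinv_0_lt_compat _ ln_q_gt0.
rewrite !entropyE /Rdiv; nra.
Qed.

End Submodularity.

Lemma entropy_pair_const (U V : eqType) (X : Om -> U) (c : V) :
  ent (pairRV X (fun _ => c)) = ent X.
Proof. by apply: entropy_partition => w v; rewrite xpair_eqE eqxx andbT. Qed.

Lemma entropy_pair_le (U V : eqType) (X : Om -> U) (Y : Om -> V) :
  ent (pairRV X Y) <= ent X + ent Y.
Proof.
have := entropy_submod X Y (fun _ => tt).
by rewrite !entropy_pair_const entropy_const; lra.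
Qed.

Lemma cond_entropy_ge0 (U V : eqType) (X : Om -> U) (Z : Om -> V) : 0 <= cent X Z.
Proof.
have : ent Z <= ent (pairRV X Z) by apply: entropy_le_determines; exact: determines_snd.
by rewrite /cond_entropy; lra.
Qed.

Lemma cond_entropy_le (U V : eqType) (X : Om -> U) (Z : Om -> V) : cent X Z <= ent X.
Proof. by have := entropy_pair_le X Z; rewrite /cond_entropy; lra. Qed.

Lemma cond_entropy_le_determines (U V W : eqType) (X : Om -> U) (Z : Om -> V)
    (Z' : Om -> W) :
  determines Z Z' -> cent X Z <= cent X Z'.
Proof.
move=> ZZ'; have := entropy_submod X Z Z'.
rewrite (@entropy_partition _ _ (pairRV (pairRV X Z) Z') (pairRV X Z)); last first.
  by move=> w v; rewrite !xpair_eqE; case: (Z w =P Z v) => [/eqP/ZZ'-> | ]; rewrite ?andbT ?andbF.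
rewrite (@entropy_partition _ _ (pairRV Z Z') Z); last first.
  by move=> w v; rewrite xpair_eqE; case: (Z w =P Z v) => [/eqP/ZZ'-> | ].
by rewrite /cond_entropy; lra.
Qed.

Lemma cond_entropy0_determines (U V W : eqType) (X : Om -> U) (Y : Om -> V)
    (Z : Om -> W) :
  cent X Y = 0 -> determines Z Y -> cent X Z = 0.
Proof.
move=> XY0 ZY; apply: Rle_antisym; last exact: cond_entropy_ge0.
by rewrite -XY0; exact: cond_entropy_le_determines.
Qed.

Lemma entropy_jointRV_le (I U : eqType) (f : I -> Om -> U) s b :
  (forall i, i \in s -> ent (f i) <= b) -> ent (jointRV f s) <= INR (size s) * b.
Proof.
elim: s => [|i s IHs] f_le.
  by rewrite /= Rmult_0_l (@eq_entropy _ _ (fun _ => [::])) ?entropy_const //; lra.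
rewrite (_ : size (i :: s) = (size s).+1) // S_INR.
rewrite (@entropy_partition _ _ _ (pairRV (f i) (jointRV f s))); last first.
  by move=> w v; rewrite xpair_eqE !jointRV_eq.
apply: Rle_trans (entropy_pair_le _ _) _.
have := IHs (fun j j_s => f_le j (@mem_behead _ (i :: s) j j_s)).
have := f_le i (mem_head i s).
by lra.
Qed.

Lemma cond_entropy_partition (U U' V : eqType) (X : Om -> U) (X' : Om -> U')
    (Z : Om -> V) :
  (forall w v, (X w == X v) = (X' w == X' v)) -> cent X Z = cent X' Z.
Proof.
move=> XX'; rewrite /cond_entropy (@entropy_partition _ _ _ (pairRV X' Z)) //.
by move=> w v; rewrite !xpair_eqE XX'.
Qed.

Lemma cond_entropy_chain (U V W : eqType) (X : Om -> U) (Y : Om -> V) (Z : Om -> W) :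
  cent (pairRV X Y) Z = cent X (pairRV Y Z) + cent Y Z.
Proof.
rewrite /cond_entropy (@entropy_partition _ _ _ (pairRV X (pairRV Y Z))).
  (* The [set]s identify entropies differing only in elaborated type annotations. *)
  set eXYZ := entropy q P (pairRV X (pairRV Y Z)).
  by set eYZ := entropy q P (pairRV Y Z); ring.
by move=> w v; rewrite !xpair_eqE andbA.
Qed.

Lemma cond_entropy_le_cond0 (U V W : eqType) (X : Om -> U) (Y : Om -> V)
    (Z : Om -> W) :
  cent X (pairRV Y Z) = 0 -> cent X Z <= cent Y Z.
Proof.
move=> XYZ0; have := cond_entropy_chain X Y Z; have := cond_entropy_chain Y X Z.
rewrite XYZ0 (@cond_entropy_partition _ _ _ (pairRV X Y) (pairRV Y X)); last first.
  by move=> w v; rewrite !xpair_eqE andbC.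
by have := cond_entropy_ge0 Y (pairRV X Z) => /=; lra.
Qed.

Lemma cond_entropy_jointRV0 (I U V : eqType) (f : I -> Om -> U) (Z : Om -> V) s :
  (forall i, i \in s -> cent (f i) Z = 0) -> cent (jointRV f s) Z = 0.
Proof.
elim: s => [|i s IHs] f0.
  by rewrite /cond_entropy (@entropy_partition _ _ _ Z); [lra | move=> w v; rewrite xpair_eqE].
rewrite (@cond_entropy_partition _ _ _ _ (pairRV (f i) (jointRV f s))); last first.
  by move=> w v; rewrite xpair_eqE !jointRV_eq.
rewrite cond_entropy_chain IHs => [|j j_s]; last exact: f0 j (@mem_behead _ (i :: s) j j_s).
rewrite Rplus_0_r; apply: cond_entropy0_determines (f0 i (mem_head i s)) _.
exact: determines_snd.
Qed.

Section SecrecyChain.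
Variables (US V : eqType) (S : Om -> US) (n d k l : nat) (alpha beta : R).
Variables (C : nat -> Om -> V) (M : nat -> nat -> Om -> V).

Let downloads i := jointRV (M i) (repair_event n d i).2.
Let eve := jointRV downloads (iota 0 l).
Let stored m := jointRV C (iota 0 m).

Hypothesis l_lt_k : (l < k)%nat.
Hypothesis C_le : forall i, (i < k)%nat -> ent (C i) <= alpha.
Hypothesis M_le : forall i j, (i < k)%nat -> j \in (repair_event n d i).2 ->
  ent (M i j) <= beta.
Hypothesis M_of_C : forall i i', (i' < i < k)%nat -> cent (M i (n + i')) (C i') = 0.
Hypothesis C_of_downloads : forall i, (i < k)%nat -> cent (C i) (downloads i) = 0.
Hypothesis reconstruction : cent S (stored k) = 0.
Hypothesis secrecy : cent S eve = ent S.

Lemma entropy_file_le : ent S <= cent (stored k) eve.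
Proof.
have := entropy_submod S eve (stored k).
have : ent (pairRV S eve) <= ent (pairRV (pairRV S eve) (stored k)).
  by apply: entropy_le_determines; exact: determines_fst.
have := reconstruction; have := secrecy.
by rewrite /cond_entropy (entropy_pairC (stored k)) /=; lra.
Qed.

Lemma cond_entropy_stored_eve m : (m <= l)%nat -> cent (stored m) eve = 0.
Proof.
move=> m_le_l; apply: cond_entropy_jointRV0 => i; rewrite mem_iota => i_lt_m.
apply: (cond_entropy0_determines (C_of_downloads _)); first lia.
by apply: determines_jointRV; rewrite mem_iota; lia.
Qed.

Lemma cond_entropy_stored_rcons m :
  cent (stored m.+1) eve = cent (C m) (pairRV (stored m) eve) + cent (stored m) eve.
Proof.
rewrite -cond_entropy_chain; apply: cond_entropy_partition => w v.
by rewrite xpair_eqE !jointRV_eq -addn1 iotaD all_cat /= andbT andbC.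
Qed.

Lemma cond_entropy_newcomer_le_alpha m (U : eqType) (Z : Om -> U) :
  (m < k)%nat -> cent (C m) Z <= alpha.
Proof. by move=> m_lt_k; apply: Rle_trans (cond_entropy_le _ _) (C_le m_lt_k). Qed.

Lemma cond_entropy_newcomer_le_beta m : (m < k)%nat ->
  cent (C m) (pairRV (stored m) eve) <= INR (d - m) * beta.
Proof.
move=> m_lt_k.
pose from_new := jointRV (M m) (iota n m).
pose from_old := jointRV (M m) (iota m.+1 (d - m)).
have forget_eve : cent (C m) (pairRV (stored m) eve) <= cent (C m) (stored m).
  by apply: cond_entropy_le_determines; exact: determines_fst.
have via_downloads : cent (C m) (stored m) <= cent (downloads m) (stored m).
  apply: cond_entropy_le_cond0; apply: (cond_entropy0_determines (C_of_downloads m_lt_k)).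
  exact: determines_fst.
have new_known : cent from_new (pairRV from_old (stored m)) = 0.
  apply: cond_entropy_jointRV0 => j; rewrite mem_iota => j_range.
  have -> : j = (n + (j - n))%nat by lia.
  apply: (cond_entropy0_determines (M_of_C _)); first lia.
  move=> w v; rewrite xpair_eqE => /andP[_]; apply: determines_jointRV.
  by rewrite mem_iota; lia.
have downloads_split : cent (downloads m) (stored m) = cent from_old (stored m).
  rewrite (@cond_entropy_partition _ _ _ _ (pairRV from_new from_old)); last first.
    by move=> w v; rewrite xpair_eqE !jointRV_eq all_cat.
  by rewrite cond_entropy_chain new_known Rplus_0_l.
have old_le : ent from_old <= INR (d - m) * beta.
  rewrite -{1}(size_iota m.+1 (d - m)); apply: entropy_jointRV_le => j j_old.
  by apply: M_le => //; rewrite mem_cat j_old orbT.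
have := cond_entropy_le from_old (stored m); lra.
Qed.

Lemma cond_entropy_stored_le m : (l <= m <= k)%nat ->
  cent (stored m) eve <= \big[Rplus/0]_(l <= i < m) Rmin (INR (d - i) * beta) alpha.
Proof.
elim: m => [|m IHm] /andP[l_le_m m_le_k].
  by rewrite big_geq // cond_entropy_stored_eve //; lra.
case: (ltnP m l) => [m_lt_l | l_le_m'].
  by rewrite big_geq // cond_entropy_stored_eve //; lra.
rewrite big_nat_recr //= cond_entropy_stored_rcons.
have := IHm (introT andP (conj l_le_m' (ltnW m_le_k))).
have := Rmin_glb _ _ _ (cond_entropy_newcomer_le_beta m_le_k)
                      (cond_entropy_newcomer_le_alpha (pairRV (stored m) eve) m_le_k).
lra.
Qed.

Lemma secrecy_chain_bound :
  ent S <= \big[Rplus/0]_(l <= i < k) Rmin (INR (d - i) * beta) alpha.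
Proof.
apply: Rle_trans entropy_file_le _; apply: cond_entropy_stored_le.
by rewrite leqnn ltnW.
Qed.

End SecrecyChain.

End Entropy.

Section SecureScheme.
Variables (F : finFieldType) (n k d l : nat) (alpha beta : R) (sc : scheme F).
Hypotheses (k_le_d : (k <= d)%nat) (d_le_n1 : (d <= n - 1)%nat) (l_lt_k : (l < k)%nat).
Hypothesis secure : secure_dss n k d l alpha beta sc.

Local Notation q := (INR #|F|).
Local Notation hist := (repair_history n d).
Local Notation repair := (repair_event n d).

Let newcomer i := Cnew sc (hist i) (repair i).
Let message i := msg sc (hist i) (repair i).

Lemma Cnode_repair_history j m :
  (j < m)%nat -> Cnode n sc (hist m) (n + j) = newcomer j.
Proof.
move=> j_lt_m; rewrite /Cnode ifF; last by apply/negbTE; rewrite -leqNgt leq_addr.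
by rewrite addKn take_repair_history ?nth_repair_history // ltnW.
Qed.

Lemma Dnode_repair_history j m :
  (j < m)%nat -> Dnode n sc (hist m) (n + j) = jointRV (message j) (repair j).2.
Proof.
move=> j_lt_m; rewrite /Dnode ifF; last by apply/negbTE; rewrite -leqNgt leq_addr.
by rewrite addKn take_repair_history ?nth_repair_history // ltnW.
Qed.

Lemma q_gt1 : 1 < q.
Proof. by rewrite -[1]/(INR 1); apply/lt_INR/ltP; exact: card_finNzRing_gt1. Qed.

Lemma repair_constraints i : (i < k)%nat ->
  (forall j, j \in (repair i).2 ->
     entropy q (P sc) (message i j) <= beta /\
     cond_entropy q (P sc) (message i j) (Cnode n sc (hist i) j) = 0) /\
  entropy q (P sc) (newcomer i) <= alpha /\
  cond_entropy q (P sc) (newcomer i) (jointRV (message i) (repair i).2) = 0.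
Proof.
move=> i_lt_k; have [_ [_ [_ [_ [repair_ok _]]]]] := secure.
have := repair_ok (hist i) (repair i).
rewrite repair_history_rcons size_repair_history (Dnode_repair_history (ltnSn i)).
by apply; apply: (valid_repair_history k_le_d d_le_n1).
Qed.

Lemma reconstruction_newcomers :
  cond_entropy q (P sc) (S sc) (jointRV newcomer (iota 0 k)) = 0.
Proof.
have [_ [_ [_ [_ [_ [recon _]]]]]] := secure.
have stored_eq : Cset n sc (hist k) (iota n k) =1 jointRV newcomer (iota 0 k).
  move=> w; rewrite /Cset /jointRV -(addn0 n) iotaDl -map_comp addn0.
  by apply/eq_in_map => j; rewrite mem_iota /= => j_lt_k; rewrite Cnode_repair_history.
rewrite -(eq_cond_entropy q (P sc) (S sc) stored_eq).
apply: recon; rewrite ?iota_uniq ?size_iota //.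
  exact: (valid_repair_history k_le_d d_le_n1).
by rewrite active_repair_history //; apply/allP => x x_new; rewrite mem_cat x_new orbT.
Qed.

Lemma secrecy_newcomers :
  cond_entropy q (P sc) (S sc) (jointRV (fun i => jointRV (message i) (repair i).2) (iota 0 l))
  = entropy q (P sc) (S sc).
Proof.
have [_ [_ [_ [_ [_ [_ secrecy]]]]]] := secure.
have seen_eq : Dset n sc (hist k) (iota n l)
               =1 jointRV (fun i => jointRV (message i) (repair i).2) (iota 0 l).
  move=> w; rewrite /Dset /jointRV -(addn0 n) iotaDl -map_comp addn0.
  apply/eq_in_map => j; rewrite mem_iota /= => j_lt_l.
  by rewrite Dnode_repair_history //; apply: ltn_trans l_lt_k.
rewrite -(eq_cond_entropy q (P sc) (S sc) seen_eq).
apply: secrecy; rewrite ?size_iota ?size_repair_history //.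
  exact: (valid_repair_history k_le_d d_le_n1).
by apply/allP => x; rewrite mem_iota /ltn /=; lia.
Qed.

Lemma secure_file_entropy_le :
  entropy q (P sc) (S sc) <= \big[Rplus/0]_(l <= i < k) Rmin (INR (d - i) * beta) alpha.
Proof.
have [P_ge0 [P_sum1 _]] := secure.
apply: (secrecy_chain_bound q_gt1 P_ge0 P_sum1 (C := newcomer) (M := message) l_lt_k).
- by move=> i /repair_constraints [_ [C_le _]].
- by move=> i j /repair_constraints [message_ok _] /message_ok [M_le _].
- move=> i i' /andP[i'_lt_i i_lt_k].
  have [message_ok _] := repair_constraints i_lt_k.
  have from_newcomer : (n + i')%nat \in (repair i).2.
    by rewrite mem_cat mem_iota; apply/orP; left; lia.
  by have [_] := message_ok _ from_newcomer; rewrite Cnode_repair_history.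
- by move=> i /repair_constraints [_ [_ C_of_D]].
- exact: reconstruction_newcomers.
- exact: secrecy_newcomers.
Qed.

End SecureScheme.

Unset Implicit Arguments.

Theorem theorem1 (F : finFieldType) (n k d l : nat) (alpha gamma : R)
    (hkd : leq k d) (hdn : leq d (n - 1)%nat) (hlk : ltn l k)
    (sc : scheme F) :
    secure_dss n k d l alpha (gamma / INR d) sc ->
    entropy (INR #|F|) (P sc) (S sc) <= secrecy_bound k d l alpha (gamma / INR d).
Proof.
move=> secure; apply: Rle_trans (secure_file_entropy_le hkd hdn hlk secure) _.
rewrite /secrecy_bound big_add1; apply: Req_le; apply: eq_big_nat => i /andP[l_le_i i_lt_k].
by rewrite (_ : (d - i.+1 + 1 = d - i)%nat) //; lia.
Qed.
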